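(* Work in the semifield $\mathbb{R}_{\max,+}$. Let $\bm{r}_1,\ldots,\bm{r}_m\in\mathbb{R}^{n}$ and $w_1,\ldots,w_m\in\mathbb{R}$, let $\bm{p}=w_1\bm{r}_1\oplus\cdots\oplus w_m\bm{r}_m$ and $\bm{q}^{-}=w_1\bm{r}_1^{-}\oplus\cdots\oplus w_m\bm{r}_m^{-}$, and let $\varphi(\bm{x})=\bm{x}^{-}\bm{p}\oplus\bm{q}^{-}\bm{x}$. Let $A=(a_{ij})\in\mathbb{R}_{\max,+}^{n\times n}$ be an irreducible matrix with $\mathrm{Tr}(A)\le\mathbb{1}$, let $S_1=\{\bm{x}\in\mathbb{R}^n\mid A\bm{x}\le\bm{x}\}$ (i.e. $\max_{j}(a_{ij}+x_j)\le x_i$ for all $i$), and put $$\Delta=\sqrt{(A^{\ast}(\bm{q}^{-}A^{\ast})^{-})^{-}\bm{p}}.$$ Then $\min_{\bm{x}\in S_1}\varphi(\bm{x})=\Delta$, and the minimum is attained at $\bm{x}=\Delta A^{\ast}(\bm{q}^{-}A^{\ast})^{-}$.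
   Context: $\mathbb{R}_{\max,+}=(\mathbb{R}\cup\{-\infty\},-\infty,0,\max,+)$: $x\oplus y=\max(x,y)$, $x\otimes y=x+y$ (sign omitted), zero $\mathbb{0}=-\infty$, identity $\mathbb{1}=0$, $x^{-1}=-x$, $\sqrt{x}=x/2$; order is the usual order on $\mathbb{R}\cup\{-\infty\}$. Matrix and vector operations are the usual ones with $\max$ in place of sum and $+$ in place of product; vector inequalities are componentwise. For a nonzero column (or row) vector $\bm{x}=(x_j)$, the pseudo-inverse $\bm{x}^{-}$ is the row (resp. column) vector with entries $-x_j$ if $x_j\ne-\infty$ and $-\infty$ otherwise; $\bm{q}$ is the column vector with $\bm{q}^{-}$ as its pseudo-inverse. $I$ is the identity matrix (0 on the diagonal, $-\infty$ elsewhere), $A^0=I$, $A^{k}=A^{k-1}A$, and $A^{\ast}=I\oplus A\oplus\cdots\oplus A^{n-1}$. A square matrix is irreducible if it cannot be brought to block-triangular form by simultaneous permutation of rows and columns. $\mathrm{tr}A=\bigoplus_i a_{ii}$ and $\mathrm{Tr}(A)=\bigoplus_{k=1}^{n}\mathrm{tr}A^{k}$. *)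

From HB Require Import structures.
From mathcomp Require Import all_boot all_order all_algebra.
From mathcomp Require Import fingroup perm.
From mathcomp Require Import reals constructive_ereal.
Set Implicit Arguments. Unset Strict Implicit. Unset Printing Implicit Defensive.
Import Order.TTheory GRing.Theory Num.Theory.
Local Open Scope ring_scope.
Local Open Scope ereal_scope.

Section MaxPlus.
Variable R : realType.

(* x (+) y = max x y, zero = -oo; x (x) y = x + y *)
Definition mp_add {a b : nat} (A B : 'M[\bar R]_(a, b)) : 'M[\bar R]_(a, b) :=
  \matrix_(i, j) Order.max (A i j) (B i j).

Definition mp_zero {a b : nat} : 'M[\bar R]_(a, b) := const_mx -oo.

Definition mp_mul {a b c : nat} (A : 'M[\bar R]_(a, b)) (B : 'M[\bar R]_(b, c))
  : 'M[\bar R]_(a, c) :=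
  \matrix_(i, j) \big[Order.max/-oo]_(k < b) (A i k + B k j).

Definition mp_id {n : nat} : 'M[\bar R]_n :=
  \matrix_(i, j) (if i == j then 0 else -oo).

Fixpoint mp_pow {n : nat} (A : 'M[\bar R]_n) (k : nat) : 'M[\bar R]_n :=
  match k with
  | 0%N => mp_id
  | k'.+1 => mp_mul (mp_pow A k') A
  end.

Definition mp_star {n : nat} (A : 'M[\bar R]_n) : 'M[\bar R]_n :=
  \big[mp_add/mp_zero]_(k < n) mp_pow A k.

Definition mp_scale {a b : nat} (c : \bar R) (A : 'M[\bar R]_(a, b)) : 'M[\bar R]_(a, b) :=
  map_mx (fun e => c + e) A.

Definition mp_pinv {a b : nat} (A : 'M[\bar R]_(a, b)) : 'M[\bar R]_(b, a) :=
  \matrix_(i, j) (if A j i == -oo then -oo else - A j i).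

Definition mp_sqrt (x : \bar R) : \bar R := x * (2^-1)%:E.

Definition mp_tr {n : nat} (A : 'M[\bar R]_n) : \bar R :=
  \big[Order.max/-oo]_(i < n) A i i.

Definition mp_Tr {n : nat} (A : 'M[\bar R]_n) : \bar R :=
  \big[Order.max/-oo]_(1 <= k < n.+1) mp_tr (mp_pow A k).

(* A is reducible iff a simultaneous permutation of rows and columns brings it
   to block-triangular form [[B, O], [C, D]] with square nonempty B, D
   (O the block of -oo entries). *)
Definition mp_reducible {n : nat} (A : 'M[\bar R]_n) : Prop :=
  exists (s : 'S_n) (k : nat), (0 < k)%N /\ (k < n)%N /\
    forall i j : 'I_n, (i < k)%N -> (k <= j)%N -> A (s i) (s j) = -oo.

Definition mp_irreducible {n : nat} (A : 'M[\bar R]_n) : Prop := ~ mp_reducible A.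

Definition mp_lift {a b : nat} (x : 'M[R]_(a, b)) : 'M[\bar R]_(a, b) :=
  map_mx (fun r => r%:E) x.

End MaxPlus.

Arguments mp_add {R a b} A B.
Arguments mp_zero {R a b}.
Arguments mp_mul {R a b c} A B.
Arguments mp_id {R n}.
Arguments mp_pow {R n} A k.
Arguments mp_star {R n} A.
Arguments mp_scale {R a b} c A.
Arguments mp_pinv {R a b} A.
Arguments mp_sqrt {R} x.
Arguments mp_tr {R n} A.
Arguments mp_Tr {R n} A.
Arguments mp_reducible {R n} A.
Arguments mp_irreducible {R n} A.
Arguments mp_lift {R a b} x.

From HB Require Import structures.
From mathcomp Require Import all_boot all_order all_algebra.
From mathcomp Require Import fingroup perm.
From mathcomp Require Import reals constructive_ereal.
From mathcomp Require Import zify ring lra.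
Import Order.TTheory GRing.Theory Num.Theory.
Local Open Scope ring_scope.
Local Open Scope ereal_scope.

(* Write r = q^- A^* and v = A^* r^-.  For x in S1, A x <= x gives A^* x <= x,
   hence r x <= q^- x <= phi(x), while x^- p <= phi(x).  Since v >= r^-, every
   term v_i^- p_i of Delta^2 = v^- p is at most (r_i x_i)(x_i^- p_i) <= phi(x)^2,
   so Delta <= phi(x).  Conversely Tr(A) <= 1 bounds every power A^k by A^*
   (a walk of length >= n contains a cycle, of weight <= 1, which can be cut
   out), so A A^* <= A^* and Delta v lies in S1; then (Delta v)^- p = Delta and
   q^- v <= r r^- = 1 gives q^- (Delta v) <= Delta. *)

Lemma bigmaxe_attained {R : realType} {I : finType} (F : I -> \bar R) (i0 : I) :
  exists i, \big[Order.max/-oo]_i F i = F i.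
Proof.
by have [i _ ->] := @eq_bigmax _ _ _ (-oo) i0 xpredT F isT (fun i _ => leNye _);
  exists i.
Qed.

Lemma adde_bigmaxr {R : realType} (I : Type) (s : seq I) (P : pred I)
    (F : I -> \bar R) c :
  c + \big[Order.max/-oo]_(i <- s | P i) F i =
  \big[Order.max/-oo]_(i <- s | P i) (c + F i).
Proof.
apply: (big_rec2 (fun y1 y2 => c + y1 = y2)); first by rewrite addeNy.
by move=> i y1 y2 _ <-; rewrite adde_maxr.
Qed.

Lemma bigmaxe_le {R : realType} {I : finType} (F : I -> \bar R) c :
  (forall i, F i <= c) -> \big[Order.max/-oo]_i F i <= c.
Proof. by move=> Fc; apply: bigmax_le => //; exact: leNye. Qed.

Lemma ge_fin_num {R : realType} {x y : \bar R} :
  x \is a fin_num -> x <= y -> y < +oo -> y \is a fin_num.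
Proof. by move: x y => [x| |] [y| |]. Qed.

Lemma mp_sqrtNy {R : realType} : mp_sqrt (-oo : \bar R) = -oo.
Proof. by rewrite /mp_sqrt mulNyr gtr0_sg ?invr_gt0 // mul1e. Qed.

Lemma mp_sqrt_le {R : realType} (x y : \bar R) : x <= y + y -> mp_sqrt x <= y.
Proof.
move: x y => [x| |] [y| |] //=; rewrite ?mp_sqrtNy ?leNye ?leey //.
by rewrite /mp_sqrt -EFinD -EFinM !lee_fin => ?; lra.
Qed.

Lemma fin_num_mp_sqrt {R : realType} (x : \bar R) :
  x \is a fin_num -> mp_sqrt x \is a fin_num.
Proof. by move=> x_fin; rewrite /mp_sqrt fin_numM. Qed.

Lemma mp_sqrt_twice {R : realType} (x : \bar R) :
  x \is a fin_num -> mp_sqrt x + mp_sqrt x = x.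
Proof.
by move: x => [x| |] // _; rewrite /mp_sqrt -EFinM -EFinD; congr _%:E; field.
Qed.

Lemma mp_pinv_fin {R : realType} {a b} (x : 'M[\bar R]_(a, b)) i j :
  x j i \is a fin_num -> mp_pinv x i j = - x j i.
Proof. by rewrite mxE fin_numE => /andP[/negPf-> _]. Qed.

Lemma mp_starE {R : realType} {n} (A : 'M[\bar R]_n) i j :
  mp_star A i j = \big[Order.max/-oo]_(k < n) mp_pow A k i j.
Proof.
by apply: (big_morph (fun M : 'M_n => M i j) (id1 := -oo)) => [M N|]; rewrite mxE.
Qed.

Lemma mp_sum_entry {R : realType} {a b m} (F : 'I_m -> 'M[\bar R]_(a, b)) i j :
  (\big[mp_add/mp_zero]_(k < m) F k) i j = \big[Order.max/-oo]_(k < m) F k i j.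
Proof.
by apply: (big_morph (fun M : 'M_(a, b) => M i j) (id1 := -oo)) => [M N|]; rewrite mxE.
Qed.

Lemma mp_sum_fin {R : realType} {a b m} (F : 'I_m -> 'M[\bar R]_(a, b)) i j :
  (0 < m)%N -> (forall k, F k i j \is a fin_num) ->
  (\big[mp_add/mp_zero]_(k < m) F k) i j \is a fin_num.
Proof.
move=> m0 F_fin; rewrite mp_sum_entry.
by have [k ->] := bigmaxe_attained (fun k => F k i j) (Ordinal m0).
Qed.

Section StarClosure.
Context {R : realType} {n : nat} (A : 'M[\bar R]_n).

Fixpoint walk_weight (f : nat -> 'I_n) (a k : nat) : \bar R :=
  if k is k'.+1 then walk_weight f a k' + A (f (a + k')%N) (f (a + k').+1)
  else 0.

Lemma walk_weight_cat f a k1 k2 :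
  walk_weight f a (k1 + k2) = walk_weight f a k1 + walk_weight f (a + k1) k2.
Proof.
elim: k2 => [|k2 IH]; first by rewrite addn0 adde0.
by rewrite addnS /= IH -addeA !addnA.
Qed.

Lemma eq_walk_weight f g a k :
  (forall t, (a <= t <= a + k)%N -> f t = g t) ->
  walk_weight f a k = walk_weight g a k.
Proof.
elim: k => [//|k IH] fg /=.
by rewrite IH => [|t /andP[a_le_t t_le]]; rewrite ?fg //; lia.
Qed.

Lemma walk_weight_shift f a d k :
  walk_weight f (a + d) k = walk_weight (fun t => f (t + d)%N) a k.
Proof. by elim: k => [//|k IH] /=; rewrite IH; congr (_ + A (f _) (f _)); lia. Qed.

Lemma walk_weight_le_pow f a k :
  walk_weight f a k <= mp_pow A k (f a) (f (a + k)%N).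
Proof.
elim: k => [|k IH] /=; first by rewrite mxE addn0 eqxx.
rewrite mxE addnS; apply: le_trans _ (le_bigmax _ _ (f (a + k)%N)).
exact: leeD.
Qed.

Lemma pow_walk k i j : mp_pow A k i j = -oo \/
  exists2 f, f 0%N = i /\ f k = j & mp_pow A k i j <= walk_weight f 0 k.
Proof.
elim: k i j => [|k IH] i j /=.
  by rewrite mxE; case: eqP => [<-|_]; [right; exists (fun=> i)|left].
rewrite mxE; have [l ->] := bigmaxe_attained (fun l => mp_pow A k i l + A l j) i.
have [->|[f [f0 fk] fle]] := IH i l; first by left.
right; exists (fun t => if (t <= k)%N then f t else j); first by rewrite ltnn.
rewrite /= add0n leqnn ltnn (@eq_walk_weight _ f) => [|t /andP[_ ->]] //.
by rewrite fk; exact: leeD.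
Qed.

Definition drop_cycle (f : nat -> 'I_n) (a b : nat) (t : nat) : 'I_n :=
  if (t <= a)%N then f t else f (t + (b - a))%N.

Lemma walk_weight_drop_cycle f a b k : (a <= b <= k)%N -> f a = f b ->
  walk_weight f 0 k =
  walk_weight f a (b - a) + walk_weight (drop_cycle f a b) 0 (k - (b - a)).
Proof.
move=> /andP[ab bk] fab; set g := drop_cycle f a b.
have -> : (k - (b - a) = a + (k - b))%N by lia.
rewrite walk_weight_cat add0n (@eq_walk_weight g f 0 a) => [|t /andP[_ ta]];
  last by rewrite /g /drop_cycle ta.
rewrite (@eq_walk_weight g (fun t => f (t + (b - a))%N) a) => [|t /andP[a_le_t _]];
  last first.
  rewrite /g /drop_cycle; case: ifP => // ta; have -> : t = a by lia.
  by rewrite fab; congr f; lia.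
rewrite -walk_weight_shift (_ : (a + (b - a) = b)%N); last by lia.
rewrite addeCA {1}(_ : k = a + ((b - a) + (k - b)))%N; last by lia.
by rewrite !walk_weight_cat add0n subnKC.
Qed.

Lemma walk_weight_cons f i k :
  A i (f 0%N) + walk_weight f 0 k =
  walk_weight (fun t => if t is t'.+1 then f t' else i) 0 k.+1.
Proof.
rewrite -add1n walk_weight_cat /= add0e add0n; congr (_ + _).
by rewrite walk_weight_shift; apply: eq_walk_weight => t _; rewrite addn1.
Qed.

Lemma mp_pow_lt_le_star k i j : (k < n)%N -> mp_pow A k i j <= mp_star A i j.
Proof. by move=> kn; rewrite mp_starE (le_bigmax _ _ (Ordinal kn)). Qed.

Lemma pigeonhole_walk (f : nat -> 'I_n) :
  exists a b, (a < b <= n)%N /\ f a = f b.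
Proof.
have /injectivePn[x [y xy fxy]] : ~~ injectiveb (fun i : 'I_n.+1 => f i).
  by apply/injectiveP => /leq_card; rewrite !card_ord ltnn.
have := ltn_ord x; have := ltn_ord y.
case: (ltngtP x y) => [xy' | yx |/val_inj exy]; last by rewrite exy eqxx in xy.
- by exists x, y; split=> //; apply/andP; split.
- by exists y, x; split=> //; apply/andP; split.
Qed.

Lemma mp_star_diag_ge0 i : 0 <= mp_star A i i.
Proof.
have n0 : (0 < n)%N by case: i => i; lia.
by apply: le_trans (mp_pow_lt_le_star 0 i i n0); rewrite /= mxE eqxx.
Qed.

Lemma mp_pow_lt_pinfty : (forall i j, A i j < +oo) ->
  forall k i j, mp_pow A k i j < +oo.
Proof.
move=> Afin; elim=> [|k IH] i j /=; rewrite mxE; first by case: (i == j); rewrite ltey.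
have [l ->] := bigmaxe_attained (fun l => mp_pow A k i l + A l j) i.
exact: lte_add_pinfty.
Qed.

Lemma mp_star_lt_pinfty : (forall i j, A i j < +oo) ->
  forall i j, mp_star A i j < +oo.
Proof.
move=> Afin i j; rewrite mp_starE.
have [k ->] := bigmaxe_attained (fun k : 'I_n => mp_pow A k i j) (Ordinal (ltn_ord i)).
exact: mp_pow_lt_pinfty.
Qed.

Section Subeigenvector.
Variable x : 'cV[\bar R]_n.
Hypothesis Ax_le_x : forall i, mp_mul A x i ord0 <= x i ord0.

Lemma mp_pow_subeigen k i j : mp_pow A k i j + x j ord0 <= x i ord0.
Proof.
elim: k i j => [|k IH] i j /=; rewrite mxE.
  by case: eqP => [->|_]; rewrite ?add0e ?addNye ?leNye.
rewrite addeC adde_bigmaxr; apply: bigmaxe_le => l.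
rewrite addeCA (addeC (x j _)); apply: le_trans (IH i l); apply: leeD2l.
by apply: le_trans (Ax_le_x l); rewrite mxE (le_bigmax _ (fun j => A l j + x j ord0)).
Qed.

Lemma mp_star_subeigen i j : mp_star A i j + x j ord0 <= x i ord0.
Proof.
rewrite mp_starE addeC adde_bigmaxr; apply: bigmaxe_le => k.
by rewrite addeC mp_pow_subeigen.
Qed.

End Subeigenvector.

Hypothesis Tr_le0 : mp_Tr A <= 0.

Lemma walk_weight_cycle_le0 f a k :
  (0 < k <= n)%N -> f a = f (a + k)%N -> walk_weight f a k <= 0.
Proof.
move=> /andP[k0 kn] cyc; apply: le_trans (walk_weight_le_pow f a k) _.
rewrite -cyc; apply: le_trans (le_bigmax _ (fun i => mp_pow A k i i) (f a)) _.
apply: le_trans Tr_le0; apply: (le_bigmax_seq _ _ xpredT) => //.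
by rewrite mem_index_iota; apply/andP; split.
Qed.

Lemma mp_pow_le_star k i j : mp_pow A k i j <= mp_star A i j.
Proof.
elim/ltn_ind: k i j => k IH i j.
have [kn | nk] := ltnP k n; first exact: mp_pow_lt_le_star.
have [->|[f [f0 fk] fle]] := pow_walk k i j; first exact: leNye.
have [a [b [/andP[ab bn] fab]]] := pigeonhole_walk f.
have abk : (a <= b <= k)%N by lia.
rewrite (walk_weight_drop_cycle _ _ _ _ abk fab) in fle.
have cyc : walk_weight f a (b - a) <= 0.
  by apply: walk_weight_cycle_le0; rewrite ?subnKC //; lia.
set g := drop_cycle f a b; set k' := (k - (b - a))%N.
have g0 : g 0%N = i by rewrite /g /drop_cycle leq0n.
have gk' : g k' = j.
  rewrite /g /drop_cycle /k'; case: ifP => [le_k'a | _].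
    by rewrite (_ : k - (b - a) = a)%N ?fab -?fk; [congr f | ]; lia.
  by rewrite subnK ?fk //; lia.
apply: le_trans fle _; apply: le_trans (leeD2r _ cyc) _; rewrite add0e.
apply: le_trans (walk_weight_le_pow g 0 k') _.
by rewrite add0n g0 gk' IH //; lia.
Qed.

Lemma mp_star_mull i j l : A i j + mp_star A j l <= mp_star A i l.
Proof.
rewrite mp_starE adde_bigmaxr; apply: bigmaxe_le => k.
have [->|[f [f0 fk] fle]] := pow_walk k j l; first by rewrite addeNy leNye.
apply: le_trans (leeD2l _ fle) _; rewrite -f0 walk_weight_cons.
apply: le_trans (walk_weight_le_pow _ 0 k.+1) _; rewrite add0n -fk.
exact: mp_pow_le_star.
Qed.

End StarClosure.

Section Minimization.
Context {R : realType} {n : nat} (A : 'M[\bar R]_n).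
Variables (p : 'cV[\bar R]_n) (qm : 'rV[\bar R]_n).
Hypotheses (A_lt_pinfty : forall i j, A i j < +oo)
  (p_fin : forall i, p i ord0 \is a fin_num)
  (qm_fin : forall j, qm ord0 j \is a fin_num).

(* In the paper's notation [qm] is q^-, [qA] is r = q^- A^*, [v] is A^* r^-
   and [D] = v^- p is Delta^2. *)
Let qA := mp_mul qm (mp_star A).
Let v := mp_mul (mp_star A) (mp_pinv qA).
Let D : \bar R := mp_mul (mp_pinv v) p ord0 ord0.
Let phi (x : 'cV[\bar R]_n) : \bar R :=
  Order.max (mp_mul (mp_pinv x) p ord0 ord0) (mp_mul qm x ord0 ord0).

Lemma qm_le_qA j : qm ord0 j <= qA ord0 j.
Proof.
rewrite mxE; apply: le_trans (le_bigmax _ _ j).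
by rewrite -{1}(adde0 (qm _ _)) leeD2l // mp_star_diag_ge0.
Qed.

Lemma qA_fin j : qA ord0 j \is a fin_num.
Proof.
apply: (ge_fin_num (qm_fin j) (qm_le_qA j)).
rewrite mxE; have [l ->] := bigmaxe_attained (fun l => qm ord0 l + mp_star A l j) j.
apply: lte_add_pinfty; last exact: mp_star_lt_pinfty.
by move: (qm_fin l); rewrite fin_numElt => /andP[].
Qed.

Lemma v_entry i : v i ord0 = \big[Order.max/-oo]_k (mp_star A i k - qA ord0 k).
Proof. by rewrite mxE; apply: eq_bigr => k _; rewrite mp_pinv_fin ?qA_fin. Qed.

Lemma oppe_qA_le_v i : - qA ord0 i <= v i ord0.
Proof.
rewrite v_entry; apply: le_trans (le_bigmax _ _ i).
by rewrite -{1}(add0e (- _)) leeD2r // mp_star_diag_ge0.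
Qed.

Lemma v_fin i : v i ord0 \is a fin_num.
Proof.
apply: (ge_fin_num _ (oppe_qA_le_v i)); first by rewrite fin_numN qA_fin.
rewrite v_entry; have [k ->] := bigmaxe_attained (fun k => mp_star A i k - qA ord0 k) i.
apply: lte_add_pinfty; first exact: mp_star_lt_pinfty.
by move: (qA_fin k); rewrite -fin_numN fin_numElt => /andP[].
Qed.

Lemma D_fin : (0 < n)%N -> D \is a fin_num.
Proof.
move=> n0; rewrite /D mxE.
have [i ->] := bigmaxe_attained (fun i => mp_pinv v ord0 i + p i ord0) (Ordinal n0).
by rewrite mp_pinv_fin ?v_fin // fin_numD fin_numN v_fin p_fin.
Qed.

Lemma sqrt_D_le_phi (x : 'cV[\bar R]_n) :
  (forall i, x i ord0 \is a fin_num) ->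
  (forall i, mp_mul A x i ord0 <= x i ord0) ->
  mp_sqrt D <= phi x.
Proof.
move=> x_fin Ax_le_x; apply: mp_sqrt_le.
have p_le i : - x i ord0 + p i ord0 <= phi x.
  rewrite /phi le_max mxE; apply/orP; left.
  by apply: le_trans (le_bigmax _ _ i); rewrite mp_pinv_fin ?x_fin.
have qA_le i : x i ord0 + qA ord0 i <= phi x.
  rewrite /phi le_max; apply/orP; right; rewrite !mxE adde_bigmaxr.
  apply: le_bigmax2 => l _; rewrite addeCA leeD2l // addeC.
  exact: mp_star_subeigen.
rewrite /D mxE; apply: bigmaxe_le => i; rewrite mp_pinv_fin ?v_fin //.
apply: le_trans (leeD (qA_le i) (p_le i)).
rewrite addeACA subee ?x_fin // add0e leeD2r //.
by rewrite leeNl oppe_qA_le_v.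
Qed.

Lemma qm_add_v_le0 j : qm ord0 j + v j ord0 <= 0.
Proof.
rewrite v_entry adde_bigmaxr; apply: bigmaxe_le => k.
rewrite addeA -(subee (qA_fin k)) leeD2r //.
by rewrite [qA _ _]mxE (le_bigmax _ (fun l => qm ord0 l + mp_star A l k)).
Qed.

Let x_opt := mp_scale (mp_sqrt D) v.

Lemma x_optE i : x_opt i ord0 = mp_sqrt D + v i ord0.
Proof. by rewrite mxE. Qed.

Lemma x_opt_fin i : (0 < n)%N -> x_opt i ord0 \is a fin_num.
Proof. by move=> n0; rewrite x_optE fin_numD fin_num_mp_sqrt ?D_fin ?v_fin. Qed.

Lemma phi_x_opt : (0 < n)%N -> phi x_opt = mp_sqrt D.
Proof.
move=> n0; have sqrt_D_fin := fin_num_mp_sqrt _ (D_fin n0).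
have left_term : mp_mul (mp_pinv x_opt) p ord0 ord0 = mp_sqrt D.
  transitivity (- mp_sqrt D + D); last first.
    rewrite -[X in _ + X](mp_sqrt_twice _ (D_fin n0)).
    by rewrite addeA (addeC (- _)) subee // add0e.
  set s := mp_sqrt D; rewrite /D !mxE adde_bigmaxr; apply: eq_bigr => i _.
  rewrite !mp_pinv_fin ?v_fin ?x_optE ?fin_numD ?sqrt_D_fin ?v_fin //.
  rewrite oppeD ?fin_num_adde_defl ?v_fin //; exact: esym (addeA _ _ _).
have right_term : mp_mul qm x_opt ord0 ord0 <= mp_sqrt D.
  rewrite mxE; apply: bigmaxe_le => j.
  by rewrite x_optE addeCA -{2}(adde0 (mp_sqrt D)) leeD2l // qm_add_v_le0.
by rewrite /phi left_term max_l.
Qed.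

Hypothesis Tr_le0 : mp_Tr A <= 0.

Lemma x_opt_subeigen i : mp_mul A x_opt i ord0 <= x_opt i ord0.
Proof.
have Av_le_v : mp_mul A v i ord0 <= v i ord0.
  rewrite mxE; apply: bigmaxe_le => j; rewrite !v_entry adde_bigmaxr.
  by apply: le_bigmax2 => k _; rewrite addeA leeD2r // mp_star_mull.
rewrite x_optE mxE; apply: bigmaxe_le => j; rewrite x_optE addeCA leeD2l //.
apply: le_trans Av_le_v; rewrite [X in _ <= X]mxE.
exact: (le_bigmax _ (fun j => A i j + v j ord0)).
Qed.

End Minimization.

Theorem theorem7 (R : realType) (n m : nat)
  (r : 'I_m -> 'cV[R]_n) (w : 'I_m -> R) (A : 'M[\bar R]_n) :
  (0 < n)%N -> (0 < m)%N ->
  (forall i j, A i j != +oo) ->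
  mp_irreducible A ->
  mp_Tr A <= 0 ->
  let p : 'cV[\bar R]_n :=
    \big[mp_add/mp_zero]_(k < m) mp_scale (w k)%:E (mp_lift (r k)) in
  let qm : 'rV[\bar R]_n :=
    \big[mp_add/mp_zero]_(k < m) mp_scale (w k)%:E (mp_pinv (mp_lift (r k))) in
  let phi (x : 'cV[\bar R]_n) : \bar R :=
    Order.max ((mp_mul (mp_pinv x) p) 0%R 0%R) ((mp_mul qm x) 0%R 0%R) in
  let S1 (x : 'cV[\bar R]_n) : Prop :=
    (forall i, x i 0%R \is a fin_num) /\
    (forall i, (mp_mul A x) i 0%R <= x i 0%R) in
  let As := mp_star A in
  let v := mp_mul As (mp_pinv (mp_mul qm As)) in
  let Delta := mp_sqrt ((mp_mul (mp_pinv v) p) 0%R 0%R) in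
  (forall x, S1 x -> Delta <= phi x) /\
  (S1 (mp_scale Delta v) /\ phi (mp_scale Delta v) = Delta).
Proof.
move=> n0 m0 A_neq_pinfty _ Tr_le0 p qm phi S1 As v Delta.
have A_lt_pinfty i j : A i j < +oo by rewrite ltey.
have p_fin i : p i ord0 \is a fin_num.
  by apply: mp_sum_fin => // k; rewrite !mxE.
have qm_fin j : qm ord0 j \is a fin_num.
  by apply: mp_sum_fin => // k; rewrite !mxE.
split; first by move=> x [x_fin Ax_le_x]; exact: sqrt_D_le_phi.
split; first split.
- by move=> i; exact: x_opt_fin.
- exact: x_opt_subeigen.
- exact: phi_x_opt.
Qed.
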